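(* Let $n,p\ge1$ be integers and $0<\sigma\le B$. If $A\le B$, then \[ A+\frac{(\ln 2)^2}{4\sqrt2}\,\frac Bn\big(f(A)-f(B)\big)\;\le\;\int_0^Bp^{\mathrm{Benn}}(t)\,dt\;\le\;A+\frac Bn\big(f(A)-f(B)\big). \] If $A>B$, then $\int_0^Bp^{\mathrm{Benn}}(t)\,dt=B$. In general, \[ (A\wedge B)+\frac{(\ln 2)^2}{4\sqrt2}\,\frac Bn\big(f(A\wedge B)-f(B)\big)\;\le\;\int_0^Bp^{\mathrm{Benn}}(t)\,dt\;\le\;(A\wedge B)+\frac Bn\big(f(A\wedge B)-f(B)\big). \]
   Context: Let $\Psi(x)=(1+x)\ln(1+x)-x$ for $x\ge0$ (a bijection of $[0,\infty)$ onto itself) and $\Psi^{-1}$ its inverse. Define $q^{\mathrm{Benn}}(t)=2p\exp\!\big(-\frac{n\sigma^2}{B^2}\Psi(\frac{tB}{\sigma^2})\big)$ and $p^{\mathrm{Benn}}(t)=\min\{1,q^{\mathrm{Benn}}(t)\}$ for $t\ge0$, and \[ A=\frac{\sigma^2}{B}\Psi^{-1}\Big(\frac{B^2\ln(2p)}{n\sigma^2}\Big),\qquad f(t)=\frac{q^{\mathrm{Benn}}(t)}{\ln(1+tB/\sigma^2)},\ t>0. \] *)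

From Stdlib Require Import Reals Lra Epsilon.
From Coquelicot Require Import Coquelicot.
Open Scope R_scope.

Definition Psi (x : R) : R := (1 + x) * ln (1 + x) - x.

(* Psi^{-1}: the (unique, since Psi is a bijection of [0,oo)) y >= 0 with Psi y = x. *)
Definition Psi_inv (x : R) : R :=
  epsilon (inhabits 0) (fun y => 0 <= y /\ Psi y = x).

Definition qBenn (n p : nat) (sigma B t : R) : R :=
  2 * INR p * exp (- (INR n * sigma ^ 2 / B ^ 2) * Psi (t * B / sigma ^ 2)).

Definition pBenn (n p : nat) (sigma B t : R) : R := Rmin 1 (qBenn n p sigma B t).

Definition A_Benn (n p : nat) (sigma B : R) : R :=
  sigma ^ 2 / B * Psi_inv (B ^ 2 * ln (2 * INR p) / (INR n * sigma ^ 2)).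

Definition f_Benn (n p : nat) (sigma B t : R) : R :=
  qBenn n p sigma B t / ln (1 + t * B / sigma ^ 2).

(* On [0, A] the tail bound q := q^Benn is at least 1, and on [A, oo) it is at most 1,
   because its exponent lam * Psi x, with x = tB / sigma^2, is nondecreasing in t and equals
   ln (2p) at t = A.  Hence the integral of p^Benn over [0, B] is A + int_A^B q.
   Differentiating f = q / ln (1 + x) gives -(B/n) f' = q + r with
   r = q / (lam (1 + x) ln (1 + x)^2) >= 0, which yields the upper bound.  Beyond A,
   Psi x <= (1 + x) ln (1 + x)^2 and lam * Psi x >= ln 2 give r <= q / ln 2, so
   c (q + r) <= q, which yields the lower bound. *)

From Stdlib Require Import Reals Lra Psatz Epsilon Ranalysis5.
From Coquelicot Require Import Coquelicot.
Open Scope R_scope.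

Lemma ln_le_sub_1 z : 0 < z -> ln z <= z - 1.
Proof. intros Hz. generalize (exp_ineq1_le (ln z)). rewrite exp_ln; lra. Qed.

Lemma ln_nonneg z : 1 <= z -> 0 <= ln z.
Proof. intros Hz. rewrite <- ln_1. apply ln_le; lra. Qed.

Lemma one_le_mul_exp_opp k u : u <= ln k -> 0 < k -> 1 <= k * exp (- u).
Proof.
  intros Hu Hk. rewrite <- (exp_ln k) at 1 by exact Hk. rewrite <- exp_plus.
  generalize (exp_ineq1_le (ln k + - u)). lra.
Qed.

Lemma mul_exp_opp_le_one k u : ln k <= u -> 0 < k -> k * exp (- u) <= 1.
Proof.
  intros Hu Hk. rewrite <- (exp_ln k) at 1 by exact Hk. rewrite <- exp_plus.
  assert (Hinv : exp (ln k + - u) * exp (u - ln k) = 1).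
  { rewrite <- exp_plus, <- exp_0. f_equal. ring. }
  generalize (exp_ineq1_le (u - ln k)) (exp_pos (ln k + - u)). nra.
Qed.

Lemma Psi_0 : Psi 0 = 0.
Proof. unfold Psi. rewrite Rplus_0_r, ln_1. ring. Qed.

Lemma sub_le_mul_ln_sub a b : 0 < a -> 0 < b -> b - a <= b * (ln b - ln a).
Proof.
  intros Ha Hb.
  assert (Hd : ln (a / b) <= a / b - 1) by (apply ln_le_sub_1, Rdiv_lt_0_compat; lra).
  rewrite ln_div in Hd by lra.
  apply Rmult_le_compat_l with (r := b) in Hd; [|lra].
  replace (b * (a / b - 1)) with (a - b) in Hd by (field; lra). lra.
Qed.

Lemma Psi_le_compat x1 x2 : 0 <= x1 <= x2 -> Psi x1 <= Psi x2.
Proof.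
  intros [H0 H12]. unfold Psi.
  assert (Hd := sub_le_mul_ln_sub (1 + x1) (1 + x2) ltac:(lra) ltac:(lra)).
  assert (Hl := ln_nonneg (1 + x1) ltac:(lra)).
  nra.
Qed.

Lemma Psi_le_mul_ln_sqr x : 0 <= x -> Psi x <= (1 + x) * ln (1 + x) ^ 2.
Proof.
  intros Hx. unfold Psi.
  assert (Hy0 : 0 <= ln (1 + x)) by (apply ln_nonneg; lra).
  assert (Hyx : ln (1 + x) <= x) by (generalize (ln_le_sub_1 (1 + x)); lra).
  set (y := ln (1 + x)) in *.
  destruct (Rle_lt_dec y 1).
  - assert (0 <= (x - y) * (1 - y)) by (apply Rmult_le_pos; lra).
    assert (0 <= x * y ^ 2) by (apply Rmult_le_pos; nra). nra.
  - assert (0 <= (1 + x) * y * (y - 1)) by (apply Rmult_le_pos; [apply Rmult_le_pos|]; lra). nra.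
Qed.

Lemma Psi_inv_spec v : 0 <= v -> 0 <= Psi_inv v /\ Psi (Psi_inv v) = v.
Proof.
  intros Hv. unfold Psi_inv. apply epsilon_spec.
  destruct (Req_dec v 0) as [->|Hv0].
  { exists 0. split; [lra | apply Psi_0]. }
  set (M := exp (v + 1) - 1).
  assert (HM : 0 < M) by (unfold M; generalize (exp_ineq1_le (v + 1)); lra).
  assert (HPM : Psi M - v > 0).
  { unfold Psi. replace (1 + M) with (exp (v + 1)) by (unfold M; ring).
    rewrite ln_exp. unfold M. generalize (exp_ineq1_le (v + 1)). nra. }
  destruct (IVT_interv (fun x => Psi x - v) 0 M) as [z [Hz Hz0]]; try lra.
  - intros a Ha. apply continuity_pt_filterlim.
    apply (ex_derive_continuous (fun x => Psi x - v)). unfold Psi. auto_derive. lra.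
  - rewrite Psi_0. lra.
  - exists z. split; lra.
Qed.

Lemma Psi_inv_pos v : 0 < v -> 0 < Psi_inv v.
Proof.
  intros Hv. destruct (Psi_inv_spec v) as [H0 HPsi]; [lra|].
  destruct (Rle_lt_or_eq_dec _ _ H0) as [Hlt|Heq]; [exact Hlt|].
  rewrite <- Heq, Psi_0 in HPsi. lra.
Qed.

Lemma RInt_bounds_of_derive (F g h : R -> R) (a b c : R) : a <= b ->
  (forall t, a <= t <= b -> is_derive F t (g t + h t)) ->
  (forall t, a <= t <= b -> continuous g t /\ continuous h t) ->
  (forall t, a <= t <= b -> 0 <= h t /\ c * (g t + h t) <= g t) ->
  c * (F b - F a) <= RInt g a b <= F b - F a.
Proof.
  intros Hab HF Hcont Hgh.
  assert (Hint : is_RInt (fun t => g t + h t) a b (F b - F a)).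
  { apply (is_RInt_derive F (fun t => g t + h t)); rewrite Rmin_left, Rmax_right by exact Hab.
    - exact HF.
    - intros t Ht. destruct (Hcont t Ht). now apply (continuous_plus g h). }
  assert (Hg : ex_RInt g a b).
  { apply (@ex_RInt_continuous R_CompleteNormedModule). rewrite Rmin_left, Rmax_right by exact Hab.
    intros t Ht. apply Hcont, Ht. }
  assert (Hint_c : is_RInt (fun t => c * (g t + h t)) a b (c * (F b - F a)))
    by exact (is_RInt_scal _ _ _ c _ Hint).
  split.
  - rewrite <- (is_RInt_unique _ _ _ _ Hint_c).
    apply RInt_le; [exact Hab | eexists; exact Hint_c | exact Hg |].
    intros t Ht. apply Hgh. lra.
  - rewrite <- (is_RInt_unique _ _ _ _ Hint).
    apply RInt_le; [exact Hab | exact Hg | eexists; exact Hint |].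
    intros t Ht. generalize (Hgh t ltac:(lra)). lra.
Qed.

Lemma RInt_one_then (g k : R -> R) (a m b : R) : a <= m <= b ->
  (forall t, a <= t <= m -> g t = 1) -> (forall t, m <= t <= b -> g t = k t) ->
  ex_RInt k m b -> RInt g a b = m - a + RInt k m b.
Proof.
  intros [Ham Hmb] H1 Hk Hex.
  assert (Hg1 : forall t, Rmin a m < t < Rmax a m -> 1 = g t)
    by (rewrite Rmin_left, Rmax_right by lra; intros t Ht; symmetry; apply H1; lra).
  assert (Hgk : forall t, Rmin m b < t < Rmax m b -> k t = g t)
    by (rewrite Rmin_left, Rmax_right by lra; intros t Ht; symmetry; apply Hk; lra).
  rewrite <- (RInt_Chasles g a m b).
  - rewrite <- (RInt_ext _ _ _ _ Hg1), <- (RInt_ext _ _ _ _ Hgk), RInt_const.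
    change (plus (scal (m - a) 1) (RInt k m b)) with ((m - a) * 1 + RInt k m b).
    now rewrite Rmult_1_r.
  - exact (ex_RInt_ext _ _ _ _ Hg1 (ex_RInt_const _ _ _)).
  - exact (ex_RInt_ext _ _ _ _ Hgk Hex).
Qed.

Lemma Bennett_constant_bound :
  0 <= ln 2 ^ 2 / (4 * sqrt 2) /\ ln 2 ^ 2 / (4 * sqrt 2) * (1 + / ln 2) <= 1.
Proof.
  assert (Hsqrt : 1 <= sqrt 2) by (rewrite <- sqrt_1; apply sqrt_le_1_alt; lra).
  assert (Hln2 : ln 2 <= 1) by (generalize (ln_le_sub_1 2); lra).
  assert (Hln2' := ln_lt_2).
  assert (Hinv : / ln 2 < 2).
  { apply Rmult_lt_reg_l with (r := ln 2); [lra|]. rewrite Rinv_r; lra. }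
  assert (Hc : ln 2 ^ 2 / (4 * sqrt 2) <= / 4).
  { apply Rmult_le_reg_l with (r := 4 * sqrt 2); [lra|].
    unfold Rdiv. rewrite (Rmult_comm (ln 2 ^ 2)), <- Rmult_assoc, Rinv_r by lra. nra. }
  assert (0 <= ln 2 ^ 2 / (4 * sqrt 2))
    by (apply Rmult_le_pos; [nra | apply Rlt_le, Rinv_0_lt_compat; lra]).
  split; [assumption|]. nra.
Qed.

Section Bennett.

Variables (n p : nat) (sigma B : R).
Hypotheses (Hn : (1 <= n)%nat) (Hp : (1 <= p)%nat) (Hsigma : 0 < sigma) (HsigmaB : sigma <= B).

Let q := qBenn n p sigma B.
Let f := f_Benn n p sigma B.
Let A := A_Benn n p sigma B.
Let lam := INR n * sigma ^ 2 / B ^ 2.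
Let x t := t * B / sigma ^ 2.
Let r t := q t / (lam * ((1 + x t) * ln (1 + x t) ^ 2)).
Let v := B ^ 2 * ln (2 * INR p) / (INR n * sigma ^ 2).

Let sigma2_pos : 0 < sigma ^ 2. Proof. nra. Qed.
Let n_ge1 : 1 <= INR n. Proof. apply (le_INR 1), Hn. Qed.
Let p_ge1 : 1 <= INR p. Proof. apply (le_INR 1), Hp. Qed.
Let lam_pos : 0 < lam. Proof. apply Rdiv_lt_0_compat; nra. Qed.
Let ln2_le_ln2p : ln 2 <= ln (2 * INR p). Proof. apply ln_le; lra. Qed.

Lemma x_le_compat s t : s <= t -> x s <= x t.
Proof.
  intros Hst. unfold x, Rdiv.
  apply Rmult_le_compat_r; [apply Rlt_le, Rinv_0_lt_compat; lra | nra].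
Qed.

Lemma x_nonneg t : 0 <= t -> 0 <= x t.
Proof. intros Ht. generalize (x_le_compat 0 t Ht). unfold x. lra. Qed.

Let v_pos : 0 < v.
Proof. generalize ln_lt_2; intros. apply Rdiv_lt_0_compat; nra. Qed.

Lemma x_A : x A = Psi_inv v.
Proof. unfold x, A, A_Benn, v. field. lra. Qed.

Lemma x_A_pos : 0 < x A.
Proof. rewrite x_A. apply Psi_inv_pos, v_pos. Qed.

Lemma x_pos t : A <= t -> 0 < x t.
Proof. intros Ht. generalize (x_le_compat A t Ht) x_A_pos. lra. Qed.

Lemma A_pos : 0 < A.
Proof.
  unfold A, A_Benn. apply Rmult_lt_0_compat.
  - apply Rdiv_lt_0_compat; lra.
  - apply Psi_inv_pos, v_pos.
Qed.

Lemma lam_Psi_x_A : lam * Psi (x A) = ln (2 * INR p).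
Proof.
  rewrite x_A, (proj2 (Psi_inv_spec v (Rlt_le _ _ v_pos))).
  unfold lam, v. field. lra.
Qed.

Lemma lam_Psi_x_le_compat s t : 0 <= s <= t -> lam * Psi (x s) <= lam * Psi (x t).
Proof.
  intros [Hs Hst]. apply Rmult_le_compat_l; [lra|].
  apply Psi_le_compat. split; [|now apply x_le_compat].
  now apply x_nonneg.
Qed.

Lemma qBenn_eq t : q t = 2 * INR p * exp (- (lam * Psi (x t))).
Proof. unfold q, qBenn. now rewrite Ropp_mult_distr_l. Qed.

Lemma qBenn_pos t : 0 < q t.
Proof. rewrite qBenn_eq. generalize (exp_pos (- (lam * Psi (x t)))). nra. Qed.

Lemma one_le_qBenn t : 0 <= t <= A -> 1 <= q t.
Proof.
  intros Ht. rewrite qBenn_eq. apply one_le_mul_exp_opp; [|lra].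
  rewrite <- lam_Psi_x_A. now apply lam_Psi_x_le_compat.
Qed.

Lemma ln_2p_le_lam_Psi t : A <= t -> ln (2 * INR p) <= lam * Psi (x t).
Proof.
  intros Ht. rewrite <- lam_Psi_x_A. apply lam_Psi_x_le_compat.
  generalize A_pos. lra.
Qed.

Lemma qBenn_le_one t : A <= t -> q t <= 1.
Proof.
  intros Ht. rewrite qBenn_eq. apply mul_exp_opp_le_one; [|lra].
  now apply ln_2p_le_lam_Psi.
Qed.

Lemma pBenn_eq_1 t : 0 <= t <= A -> pBenn n p sigma B t = 1.
Proof. intros Ht. apply Rmin_left, one_le_qBenn, Ht. Qed.

Lemma pBenn_eq_qBenn t : A <= t -> pBenn n p sigma B t = q t.
Proof. intros Ht. apply Rmin_right, qBenn_le_one, Ht. Qed.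

Lemma is_derive_qBenn t : 0 <= t -> is_derive q t (- (INR n / B) * ln (1 + x t) * q t).
Proof.
  intros Ht. assert (Hx := x_nonneg t Ht). unfold q, qBenn, Psi, x in *.
  remember (sigma ^ 2) as s2. remember (B ^ 2) as b2.
  auto_derive; [lra|]. subst. unfold Rdiv, Rminus. field. repeat split; nra.
Qed.

Lemma is_derive_ln_1_add_x t : 0 <= t ->
  is_derive (fun s => ln (1 + x s)) t (B / sigma ^ 2 / (1 + x t)).
Proof.
  intros Ht. assert (Hx := x_nonneg t Ht). unfold x in *. remember (sigma ^ 2) as s2.
  unfold Rdiv in *. auto_derive; [lra|]. field. split; nra.
Qed.

Lemma is_derive_f_Benn t : A <= t -> is_derive f t (- (INR n / B) * (q t + r t)).
Proof.
  intros Ht. assert (Ht0 : 0 <= t) by (generalize A_pos; lra).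
  assert (Hx := x_pos t Ht).
  assert (HL : 0 < ln (1 + x t)) by (rewrite <- ln_1; apply ln_increasing; lra).
  assert (Hdiv := is_derive_div q (fun s => ln (1 + x s)) t _ _
    (is_derive_qBenn t Ht0) (is_derive_ln_1_add_x t Ht0) ltac:(lra)).
  replace (- (INR n / B) * (q t + r t)) with
    ((- (INR n / B) * ln (1 + x t) * q t * ln (1 + x t) - q t * (B / sigma ^ 2 / (1 + x t)))
      / ln (1 + x t) ^ 2).
  - exact Hdiv.
  - unfold r, lam. field. repeat split; lra.
Qed.

Lemma continuous_qBenn t : 0 <= t -> continuous q t.
Proof. intros Ht. apply (ex_derive_continuous q). eexists. exact (is_derive_qBenn t Ht). Qed.

Lemma continuous_r t : A <= t -> continuous r t.
Proof.
  intros Ht. assert (Ht0 : 0 <= t) by (generalize A_pos; lra).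
  assert (Hx := x_pos t Ht).
  assert (HL : 0 < ln (1 + x t)) by (rewrite <- ln_1; apply ln_increasing; lra).
  apply (ex_derive_continuous r), ex_derive_div.
  - eexists. exact (is_derive_qBenn t Ht0).
  - unfold x in *. remember (sigma ^ 2) as s2. unfold Rdiv in *. auto_derive. lra.
  - apply Rgt_not_eq, Rmult_lt_0_compat; [lra|]. apply Rmult_lt_0_compat; nra.
Qed.

Lemma r_le t : A <= t -> 0 <= r t <= q t / ln 2.
Proof.
  intros Ht. assert (Ht0 : 0 <= t) by (generalize A_pos; lra).
  assert (Hq := qBenn_pos t).
  assert (Hden : ln 2 <= lam * ((1 + x t) * ln (1 + x t) ^ 2)).
  { apply (Rle_trans _ _ _ ln2_le_ln2p), (Rle_trans _ _ _ (ln_2p_le_lam_Psi t Ht)).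
    apply Rmult_le_compat_l; [lra|]. apply Psi_le_mul_ln_sqr, x_nonneg, Ht0. }
  assert (Hln2 := ln_lt_2).
  unfold r. split.
  - apply Rdiv_le_0_compat; lra.
  - apply Rmult_le_compat_l; [lra|]. apply Rinv_le_contravar; lra.
Qed.

Lemma qBenn_r_bounds t : A <= t ->
  0 <= r t /\ ln 2 ^ 2 / (4 * sqrt 2) * (q t + r t) <= q t.
Proof.
  intros Ht. destruct (r_le t Ht) as [Hr0 Hr].
  destruct Bennett_constant_bound as [Hc0 Hc].
  split; [exact Hr0|].
  set (c := ln 2 ^ 2 / (4 * sqrt 2)) in *.
  assert (Hcr : c * r t <= c * (q t / ln 2)) by (apply Rmult_le_compat_l; assumption).
  assert (Hcq : c * (1 + / ln 2) * q t <= q t)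
    by (generalize (qBenn_pos t); intros; nra).
  unfold Rdiv in Hcr. nra.
Qed.

Lemma RInt_pBenn_eq : A <= B -> RInt (pBenn n p sigma B) 0 B = A + RInt q A B.
Proof.
  intros HAB. assert (HA := A_pos).
  rewrite (RInt_one_then _ q 0 A B); [now rewrite Rminus_0_r | lra | apply pBenn_eq_1 | |].
  - intros t Ht. apply pBenn_eq_qBenn, Ht.
  - apply (@ex_RInt_continuous R_CompleteNormedModule).
    rewrite Rmin_left, Rmax_right by lra. intros t Ht. apply continuous_qBenn. lra.
Qed.

Lemma RInt_qBenn_bounds : A <= B ->
  ln 2 ^ 2 / (4 * sqrt 2) * (B / INR n * (f A - f B)) <= RInt q A B <= B / INR n * (f A - f B).
Proof.
  intros HAB.
  replace (B / INR n * (f A - f B)) with (- (B / INR n) * f B - - (B / INR n) * f A) by ring.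
  apply (RInt_bounds_of_derive (fun t => - (B / INR n) * f t) q r); [exact HAB | | | ].
  - intros t Ht. replace (q t + r t) with (- (B / INR n) * (- (INR n / B) * (q t + r t)))
      by (field; lra).
    apply is_derive_scal, is_derive_f_Benn, Ht.
  - intros t Ht. split; [apply continuous_qBenn; generalize A_pos; lra | apply continuous_r, Ht].
  - intros t Ht. apply qBenn_r_bounds, Ht.
Qed.

Lemma RInt_pBenn_large_A : B < A -> RInt (pBenn n p sigma B) 0 B = B.
Proof.
  intros HBA. rewrite (RInt_ext _ (fun _ => 1)).
  - rewrite RInt_const. change ((B - 0) * 1 = B). ring.
  - rewrite Rmin_left, Rmax_right by lra. intros t Ht. apply pBenn_eq_1. lra.
Qed.

End Bennett.

Theorem theorem3p1 (n p : nat) (sigma B : R) :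
  (1 <= n)%nat -> (1 <= p)%nat -> 0 < sigma -> sigma <= B ->
  let A := A_Benn n p sigma B in
  let f := f_Benn n p sigma B in
  let I := RInt (pBenn n p sigma B) 0 B in
  let c := (ln 2) ^ 2 / (4 * sqrt 2) in
  (A <= B ->
     A + c * (B / INR n) * (f A - f B) <= I /\
     I <= A + (B / INR n) * (f A - f B)) /\
  (A > B -> I = B) /\
  (Rmin A B + c * (B / INR n) * (f (Rmin A B) - f B) <= I /\
   I <= Rmin A B + (B / INR n) * (f (Rmin A B) - f B)).
Proof.
  intros Hn Hp Hsigma HsigmaB A f I c.
  assert (Hle : A <= B ->
     A + c * (B / INR n) * (f A - f B) <= I /\ I <= A + (B / INR n) * (f A - f B)).
  { intros HAB. unfold I. rewrite RInt_pBenn_eq by assumption.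
    destruct (RInt_qBenn_bounds n p sigma B Hn Hp Hsigma HsigmaB HAB). subst A f c. lra. }
  assert (Hgt : A > B -> I = B) by exact (RInt_pBenn_large_A n p sigma B Hn Hp Hsigma HsigmaB).
  split; [exact Hle|]. split; [exact Hgt|].
  destruct (Rle_lt_dec A B) as [HAB|HBA].
  - rewrite Rmin_left by exact HAB. exact (Hle HAB).
  - rewrite Rmin_right, Hgt by lra. lra.
Qed.
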